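(* Let $(s_n)_{n\ge1}$ be a sequence of integers with $s_n\ge4$ for all $n$ and $s_n\to\infty$. Put \[ s_0=\liminf_{n\to\infty}\frac{\log(s_1\cdots s_n)}{2\log(s_1\cdots s_n)+\log s_{n+1}}. \] Then for every integer $N\ge2$, \[ \dim_H\{x\in(0,1]:\ \forall n\in\mathbb N,\ s_n\le a_n(x)\le Ns_n-1\}=s_0. \]
   Context: Lüroth digits: for $x\in(0,1]$, $a_1(x)=[1/x]+1$, $\mathcal L(x)=[1/x]([1/x]+1)x-[1/x]$ ($[t]$ = integer part), $a_{n+1}(x)=a_1(\mathcal L^n(x))$, so that $x=\frac1{a_1}+\sum_{n\ge2}\frac{1}{a_1(a_1-1)\cdots a_{n-1}(a_{n-1}-1)a_n}$. *)

From Stdlib Require Import Reals.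
From Coquelicot Require Import Coquelicot.
Open Scope R_scope.

Definition lfloor_inv (x : R) : Z := Int_part (/ x).

Definition luroth_a1 (x : R) : nat := (Z.to_nat (lfloor_inv x) + 1)%nat.

Definition luroth_map (x : R) : R :=
  let k := IZR (lfloor_inv x) in k * (k + 1) * x - k.

Definition luroth_digit (n : nat) (x : R) : nat :=
  luroth_a1 (Nat.iter (n - 1) luroth_map x).

(* diameter, as an extended real (m_infty for the empty set) *)
Definition diam (U : R -> Prop) : Rbar :=
  Rbar_lub (fun r => exists x y, U x /\ U y /\ r = Finite (Rabs (x - y))).

(* d^t with the convention 0^t = 0 (only used for t > 0) *)
Definition powt (d t : R) : R := if Rle_dec d 0 then 0 else Rpower d t.

Definition Rbar_series (f : nat -> R) : Rbar :=
  Rbar_lub (fun v => exists n, v = Finite (sum_f_R0 f n)).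

Definition hausdorff_content (t delta : R) (E : R -> Prop) : Rbar :=
  Rbar_glb (fun v => exists U : nat -> (R -> Prop),
    (forall x, E x -> exists i, U i x) /\
    (forall i, Rbar_le (diam (U i)) (Finite delta)) /\
    v = Rbar_series (fun i => powt (real (diam (U i))) t)).

Definition hausdorff_measure (t : R) (E : R -> Prop) : Rbar :=
  Rbar_lub (fun v => exists delta, 0 < delta /\ v = hausdorff_content t delta E).

Definition hausdorff_dim (E : R -> Prop) : Rbar :=
  Rbar_glb (fun v => exists t, 0 < t /\ hausdorff_measure t E = Finite 0 /\ v = Finite t).

Fixpoint prod_s (s : nat -> nat) (n : nat) : R :=
  match n with
  | O => 1
  | S m => prod_s s m * INR (s (S m))
  end.

Definition s0_term (s : nat -> nat) (n : nat) : R :=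
  ln (prod_s s n) / (2 * ln (prod_s s n) + ln (INR (s (S n)))).

From Stdlib Require Import Reals Lra Lia Psatz ZArith Classical ClassicalEpsilon List.
From Coquelicot Require Import Coquelicot.
Open Scope R_scope.

(* Upper bound: the [(N-1)^m s_1...s_m] rank-[m] cylinders meeting [E] have diameter
   [<= (4/3)^(m+1) / ((s_1...s_m)^2 s_(m+1))]; for [t > s_0] their [t]-cost tends to [0]
   along a subsequence, so [H^t(E) = 0].
   Lower bound: a mixed-radix expansion codes each [u] in [[0,1/2]] by a point of [E].  For
   [t < s_0] the codes of the points of [E] in a small set of diameter [d] fill an interval of
   length [O(d^t)] (look at the first digit where two of its points differ), so every cover of
   [E] pulls back to a cover of [[0,1/2]] and has [t]-cost bounded below: [H^t(E) > 0]. *)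

Lemma Int_part_unique (r : R) (z : Z) : IZR z <= r < IZR z + 1 -> Int_part r = z.
Proof.
  intros [H1 H2]. unfold Int_part.
  assert (z + 1 = up r)%Z by (apply tech_up; rewrite plus_IZR; simpl; lra).
  lia.
Qed.

Lemma INR_Z_to_nat (z : Z) : (0 <= z)%Z -> INR (Z.to_nat z) = IZR z.
Proof. intros H. rewrite INR_IZR_INZ, Z2Nat.id; auto. Qed.

Definition nfloor (r : R) : nat := Z.to_nat (Int_part r).

Lemma nfloor_spec (r : R) : 0 <= r -> INR (nfloor r) <= r < INR (nfloor r) + 1.
Proof.
  intros H. unfold nfloor. destruct (base_Int_part r) as [B1 B2].
  assert (0 <= Int_part r)%Z.
  { assert (-1 < IZR (Int_part r)) by lra. apply lt_IZR in H0. lia. }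
  rewrite INR_Z_to_nat by auto. lra.
Qed.

Lemma exp_le_mono (x y : R) : x <= y -> exp x <= exp y.
Proof. intros [H|H]; [left; apply exp_increasing; auto | subst; lra]. Qed.

Lemma ln_gt0 (x : R) : 1 < x -> 0 < ln x.
Proof. intros H. rewrite <- ln_1. apply ln_increasing; lra. Qed.

Lemma ln_ge0 (x : R) : 1 <= x -> 0 <= ln x.
Proof. intros H. rewrite <- ln_1. apply ln_le; lra. Qed.

Lemma Rpower_pos (a t : R) : 0 < Rpower a t.
Proof. apply exp_pos. Qed.

Lemma nat_above (A : R) : exists n : nat, A <= INR n.
Proof. destruct (INR_unbounded A) as [n Hn]. exists n. lra. Qed.

Lemma nat_ln_above (X : R) : exists B : nat, (1 <= B)%nat /\ X <= ln (INR B).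
Proof.
  destruct (nat_above (exp X)) as [n Hn]. exists (S n). split; [lia|].
  rewrite <- (ln_exp X). apply ln_le; [apply exp_pos|]. rewrite S_INR. lra.
Qed.

(* The weights [(1/2)^(i+1)] used to spread an error [eta] over a countable cover. *)
Lemma geom_half_sum (n : nat) : sum_f_R0 (fun i => (1/2)^(S i)) n <= 1.
Proof.
  assert (Hclosed : forall m, sum_f_R0 (fun i => (1/2)^(S i)) m = 1 - (1/2)^(S m)).
  { induction m; [simpl; field|]. rewrite tech5, IHm. simpl. field. }
  rewrite Hclosed. assert (0 < (1/2)^(S n)) by (apply pow_lt; lra). lra.
Qed.

(* [z^t] for [0 < t < 1] dominates [min(1, z)], so bounds on [A] and [A z] bound [A z^t]. *)
Lemma le_mul_Rpower (L A z t : R) : 0 < t < 1 -> 0 < z -> 0 <= A ->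
  L <= A -> L <= A * z -> L <= A * Rpower z t.
Proof.
  intros Ht Hz HA H1 H2. destruct (Rle_lt_dec 1 z) as [Hz1|Hz1].
  - apply Rle_trans with A; auto. rewrite <- (Rmult_1_r A) at 1. apply Rmult_le_compat_l; auto.
    pose proof (ln_ge0 z Hz1). unfold Rpower. rewrite <- exp_0. apply exp_le_mono. nra.
  - apply Rle_trans with (A * z); auto. apply Rmult_le_compat_l; auto.
    assert (ln z < 0) by (rewrite <- ln_1; apply ln_increasing; lra).
    unfold Rpower. rewrite <- (exp_ln z) at 1 by lra. apply exp_le_mono. nra.
Qed.

Lemma linear_le_ln (a q e : R) (m : nat) : 0 < e ->
  (INR m + 1) * (Rabs a + Rabs (ln e)) <= q -> (INR m + 1) * a - q <= ln e.
Proof.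
  intros He H. pose proof (pos_INR m). pose proof (Rle_abs a). pose proof (Rabs_pos (ln e)).
  pose proof (Rle_abs (- ln e)). rewrite Rabs_Ropp in H3.
  assert ((INR m + 1) * a <= (INR m + 1) * Rabs a) by (apply Rmult_le_compat_l; lra).
  assert (Rabs (ln e) <= (INR m + 1) * Rabs (ln e)) by nra. nra.
Qed.

Lemma liminf_bounded (u : nat -> R) (a b : R) : (forall n, a <= u n <= b) ->
  exists l, LimInf_seq u = Finite l /\ a <= l <= b /\
    (forall t, l < t -> forall K, exists n, (K <= n)%nat /\ u n < t) /\
    (forall t, t < l -> exists K, forall n, (K <= n)%nat -> t < u n).
Proof.
  intros Hu. destruct (ex_LimInf_seq u) as [li Hli].
  rewrite (is_LimInf_seq_unique _ _ Hli).
  destruct li as [l| |]; simpl in Hli.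
  - assert (Hfreq : forall t, l < t -> forall K, exists n, (K <= n)%nat /\ u n < t).
    { intros t Ht K. destruct (Hli (mkposreal (t - l) ltac:(lra))) as [A _]. simpl in A.
      destruct (A K) as [n [Hn Hn']]. exists n. split; auto. lra. }
    assert (Hev : forall t, t < l -> exists K, forall n, (K <= n)%nat -> t < u n).
    { intros t Ht. destruct (Hli (mkposreal (l - t) ltac:(lra))) as [_ [K HK]]. simpl in HK.
      exists K. intros n Hn. specialize (HK n Hn). lra. }
    exists l. repeat split; auto.
    + destruct (Rle_lt_dec a l) as [H|H]; auto.
      destruct (Hfreq ((l + a) / 2) ltac:(lra) O) as [n [_ Hn]]. specialize (Hu n). lra.
    + destruct (Rle_lt_dec l b) as [H|H]; auto.
      destruct (Hev ((l + b) / 2) ltac:(lra)) as [K HK].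
      specialize (HK K (le_n K)). specialize (Hu K). lra.
  - exfalso. destruct (Hli (b + 1)) as [K HK]. specialize (HK K (le_n K)). specialize (Hu K). lra.
  - exfalso. destruct (Hli (a - 1) O) as [n [_ Hn]]. specialize (Hu n). lra.
Qed.

Lemma Rbar_lub_spec (E : Rbar -> Prop) : Rbar_is_lub E (Rbar_lub E).
Proof. unfold Rbar_lub. destruct (Rbar_ex_lub E); auto. Qed.

Lemma Rbar_glb_spec (E : Rbar -> Prop) : Rbar_is_glb E (Rbar_glb E).
Proof. unfold Rbar_glb. destruct (Rbar_ex_glb E); auto. Qed.

Lemma diam_le (U : R -> Prop) (D : R) : 0 <= D ->
  (forall x y, U x -> U y -> Rabs (x - y) <= D) ->
  Rbar_le (diam U) (Finite D) /\ real (diam U) <= D /\ 0 <= real (diam U).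
Proof.
  intros HD H.
  destruct (Rbar_lub_spec (fun r => exists x y, U x /\ U y /\ r = Finite (Rabs (x - y))))
    as [Hub Hl]. fold (diam U) in Hub, Hl.
  assert (H1 : Rbar_le (diam U) (Finite D)).
  { apply Hl. intros v [x [y [Hx [Hy ->]]]]. apply H; auto. }
  split; auto.
  destruct (diam U) as [r| |] eqn:E; simpl in *; try lra; try contradiction.
  destruct (classic (exists x, U x)) as [[x Hx]|Hn].
  - assert (Rbar_le (Finite (Rabs (x - x))) (Finite r)) by (apply Hub; exists x, x; auto).
    simpl in H0. pose proof (Rabs_pos (x - x)). lra.
  - exfalso. apply (Hl m_infty). intros v [x [y [Hx _]]]. exfalso. apply Hn; exists x; auto.
Qed.

Lemma dist_le_diam (U : R -> Prop) (delta x y : R) :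
  Rbar_le (diam U) (Finite delta) -> U x -> U y -> Rabs (x - y) <= real (diam U).
Proof.
  intros Hd Hx Hy.
  destruct (Rbar_lub_spec (fun r => exists x y, U x /\ U y /\ r = Finite (Rabs (x - y))))
    as [Hub _]. fold (diam U) in Hub.
  assert (Rbar_le (Finite (Rabs (x - y))) (diam U)) by (apply Hub; exists x, y; auto).
  destruct (diam U); simpl in *; try contradiction; auto.
Qed.

Lemma diam_real_le (U : R -> Prop) (delta x : R) :
  Rbar_le (diam U) (Finite delta) -> U x -> real (diam U) <= delta.
Proof.
  intros Hd Hx.
  destruct (Rbar_lub_spec (fun r => exists x y, U x /\ U y /\ r = Finite (Rabs (x - y))))
    as [Hub _]. fold (diam U) in Hub.
  assert (Rbar_le (Finite (Rabs (x - x))) (diam U)) by (apply Hub; exists x, x; auto).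
  destruct (diam U); simpl in *; auto; contradiction.
Qed.

Lemma powt_nonneg (d t : R) : 0 <= powt d t.
Proof. unfold powt. destruct (Rle_dec d 0); [lra | left; apply exp_pos]. Qed.

Lemma powt_le (d D t : R) : 0 <= t -> d <= D -> 0 < D -> powt d t <= Rpower D t.
Proof.
  intros Ht H HD. unfold powt. destruct (Rle_dec d 0).
  - left; apply exp_pos.
  - apply Rle_Rpower_l; auto. lra.
Qed.

Lemma Rbar_series_nonneg (f : nat -> R) :
  (forall i, 0 <= f i) -> Rbar_le (Finite 0) (Rbar_series f).
Proof.
  intros H. destruct (Rbar_lub_spec (fun v => exists n, v = Finite (sum_f_R0 f n))) as [Hub _].
  eapply Rbar_le_trans; [|apply Hub; exists O; reflexivity]. apply H.
Qed.

Lemma Rbar_series_le (f : nat -> R) (A : R) :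
  (forall n, sum_f_R0 f n <= A) -> Rbar_le (Rbar_series f) (Finite A).
Proof.
  intros H. destruct (Rbar_lub_spec (fun v => exists n, v = Finite (sum_f_R0 f n))) as [_ Hl].
  apply Hl. intros v [n ->]. apply H.
Qed.

Lemma Rbar_series_ge (f : nat -> R) (c : R) :
  (forall S, (forall n, sum_f_R0 f n <= S) -> c <= S) -> Rbar_le (Finite c) (Rbar_series f).
Proof.
  intros H. destruct (Rbar_lub_spec (fun v => exists n, v = Finite (sum_f_R0 f n))) as [Hub _].
  fold (Rbar_series f) in Hub.
  destruct (Rbar_series f) as [S| |] eqn:E; simpl; auto.
  - apply H. intros n. specialize (Hub (Finite (sum_f_R0 f n)) (ex_intro _ n eq_refl)). exact Hub.
  - exact (Hub (Finite (sum_f_R0 f 0)) (ex_intro _ O eq_refl)).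
Qed.

Definition cover_costs (t delta : R) (E : R -> Prop) : Rbar -> Prop :=
  fun v => exists U : nat -> (R -> Prop),
    (forall x, E x -> exists i, U i x) /\
    (forall i, Rbar_le (diam (U i)) (Finite delta)) /\
    v = Rbar_series (fun i => powt (real (diam (U i))) t).

Lemma hausdorff_measure_null (t : R) (E : R -> Prop) :
  (forall delta eps, 0 < delta -> 0 < eps -> exists U : nat -> (R -> Prop),
     (forall x, E x -> exists i, U i x) /\ (forall i, Rbar_le (diam (U i)) (Finite delta)) /\
     Rbar_le (Rbar_series (fun i => powt (real (diam (U i))) t)) (Finite eps)) ->
  hausdorff_measure t E = Finite 0.
Proof.
  intros H.
  assert (Hcont : forall delta, 0 < delta -> hausdorff_content t delta E = Finite 0).
  { intros delta Hdelta.
    destruct (Rbar_glb_spec (cover_costs t delta E)) as [Hlb Hg].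
    change (hausdorff_content t delta E) with (Rbar_glb (cover_costs t delta E)).
    set (g := Rbar_glb _) in *.
    assert (H0 : Rbar_le (Finite 0) g).
    { apply Hg. intros v [U [_ [_ ->]]]. apply Rbar_series_nonneg. intros; apply powt_nonneg. }
    assert (H1 : forall eps, 0 < eps -> Rbar_le g (Finite eps)).
    { intros eps He. destruct (H delta eps Hdelta He) as [U [A [B C]]].
      eapply Rbar_le_trans; [apply Hlb; exists U; repeat split; eauto|]. exact C. }
    destruct g as [r| |]; simpl in *; try contradiction.
    - f_equal. destruct (Rle_lt_dec r 0) as [Hr|Hr]; [lra|].
      specialize (H1 (r/2) ltac:(lra)). simpl in H1. lra.
    - specialize (H1 1 ltac:(lra)). contradiction. }
  apply Rbar_is_lub_unique. split.
  - intros v [d [Hd ->]]. rewrite Hcont; simpl; auto; lra.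
  - intros b Hb. apply Hb. exists 1. split; [lra|]. rewrite Hcont; auto; lra.
Qed.

Lemma hausdorff_measure_pos (t : R) (E : R -> Prop) (delta c : R) : 0 < delta -> 0 < c ->
  (forall U : nat -> (R -> Prop), (forall x, E x -> exists i, U i x) ->
     (forall i, Rbar_le (diam (U i)) (Finite delta)) ->
     Rbar_le (Finite c) (Rbar_series (fun i => powt (real (diam (U i))) t))) ->
  hausdorff_measure t E <> Finite 0.
Proof.
  intros Hd Hc H Heq.
  assert (Hcont : Rbar_le (Finite c) (hausdorff_content t delta E)).
  { destruct (Rbar_glb_spec (cover_costs t delta E)) as [_ Hg].
    apply Hg. intros v [U [A [B ->]]]. apply H; auto. }
  assert (Hm : Rbar_le (hausdorff_content t delta E) (hausdorff_measure t E)).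
  { destruct (Rbar_lub_spec (fun v => exists delta, 0 < delta /\ v = hausdorff_content t delta E))
      as [Hub _].
    apply Hub. exists delta; auto. }
  rewrite Heq in Hm. pose proof (Rbar_le_trans _ _ _ Hcont Hm). simpl in H0. lra.
Qed.

Lemma hausdorff_dim_eq (E : R -> Prop) (l : R) : 0 <= l ->
  (forall t, l < t -> hausdorff_measure t E = Finite 0) ->
  (forall t, 0 < t -> t < l -> hausdorff_measure t E <> Finite 0) ->
  hausdorff_dim E = Finite l.
Proof.
  intros Hl Hup Hlow. apply Rbar_is_glb_unique. split.
  - intros v [t [Ht [H0 ->]]]. simpl.
    destruct (Rle_lt_dec l t) as [H|H]; auto. exfalso. exact (Hlow t Ht H H0).
  - intros b Hb.
    assert (Hall : forall t, l < t -> Rbar_le b (Finite t)).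
    { intros t Ht. apply Hb. exists t. repeat split; auto. lra. }
    destruct b as [b| |]; simpl; auto.
    + destruct (Rle_lt_dec b l) as [H|H]; auto.
      specialize (Hall ((b + l)/2) ltac:(lra)). simpl in Hall. lra.
    + exact (Hall (l + 1) ltac:(lra)).
Qed.

Lemma sum_finite_support (f : nat -> R) (M : nat) (c : R) : 0 <= c ->
  (forall j, 0 <= f j <= c) -> (forall j, (M <= j)%nat -> f j = 0) ->
  forall n, sum_f_R0 f n <= INR M * c.
Proof.
  intros Hc Hf H0 n.
  assert (G : sum_f_R0 f n <= INR (Nat.min (S n) M) * c).
  { induction n; simpl sum_f_R0.
    - specialize (Hf O).
      destruct M as [|[|M]]; simpl; [rewrite H0 by lia; lra | lra | lra].
    - destruct (le_lt_dec M (S n)) as [HM|HM].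
      + rewrite H0, Nat.min_r by lia. rewrite Nat.min_r in IHn by lia. lra.
      + rewrite Nat.min_l by lia. rewrite Nat.min_l in IHn by lia. rewrite S_INR.
        specialize (Hf (S n)). lra. }
  apply Rle_trans with (1 := G). apply Rmult_le_compat_r; auto. apply le_INR. lia.
Qed.

(** * Lebesgue's covering inequality for [[0, b]]

   Slightly enlarged open intervals admit a finite
   subcover (compactness), and a finite cover by open intervals is handled by
   induction on its size. *)

Definition lsum (f : nat -> R) (L : list nat) : R := fold_right (fun i acc => f i + acc) 0 L.

Lemma lsum_nonneg (f : nat -> R) (L : list nat) : (forall i, 0 <= f i) -> 0 <= lsum f L.
Proof. intros H; induction L; simpl; [lra|]. specialize (H a). lra. Qed.

Lemma lsum_remove (f : nat -> R) (L : list nat) (j : nat) : (forall i, 0 <= f i) -> In j L ->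
  f j + lsum f (remove Nat.eq_dec j L) <= lsum f L.
Proof.
  intros H; induction L as [|a L IH]; intros Hin; [destruct Hin|]. simpl.
  destruct (Nat.eq_dec j a) as [->|Hne].
  - destruct (in_dec Nat.eq_dec a L) as [Hi|Hni].
    + specialize (IH Hi). specialize (H a). lra.
    + rewrite notin_remove by auto. lra.
  - simpl. destruct Hin as [->|Hi]; [congruence|]. specialize (IH Hi). lra.
Qed.

Lemma lsum_app (f : nat -> R) (l1 l2 : list nat) : lsum f (l1 ++ l2) = lsum f l1 + lsum f l2.
Proof. induction l1; simpl; [ring|]. unfold lsum in *. simpl. rewrite IHl1. ring. Qed.

Lemma lsum_seq (f : nat -> R) (n : nat) : lsum f (seq 0 (S n)) = sum_f_R0 f n.
Proof. induction n; [simpl; ring|]. rewrite seq_S, lsum_app, IHn. simpl. ring. Qed.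

(* Finite covers: take the interval containing the right end [c] and recurse on the rest. *)
Lemma finite_cover_length (al be : nat -> R) : forall L a c,
  (forall x, a <= x <= c -> exists i, In i L /\ al i < x < be i) ->
  c - a <= lsum (fun i => Rmax 0 (be i - al i)) L.
Proof.
  intros L. remember (length L) as n eqn:Hn. revert L Hn.
  induction n as [n IH] using lt_wf_ind. intros L Hn a c Hc.
  assert (Hf : forall i, 0 <= Rmax 0 (be i - al i)) by (intros; apply Rmax_l).
  destruct (Rlt_le_dec c a) as [Hca|Hac].
  { pose proof (lsum_nonneg _ L Hf). lra. }
  destruct (Hc c (conj Hac (Rle_refl c))) as [j [Hj [J1 J2]]].
  pose proof (lsum_remove _ L j Hf Hj) as Hrm.
  assert (Hmax : be j - al j <= Rmax 0 (be j - al j)) by apply Rmax_r.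
  destruct (Rlt_le_dec (al j) a) as [Hja|Haj].
  - pose proof (lsum_nonneg _ (remove Nat.eq_dec j L) Hf). lra.
  - assert (al j - a <= lsum (fun i => Rmax 0 (be i - al i)) (remove Nat.eq_dec j L)).
    { apply (IH (length (remove Nat.eq_dec j L))); [| reflexivity |].
      - rewrite Hn. apply remove_length_lt; auto.
      - intros x [X1 X2]. assert (X3 : x <= c) by lra.
        destruct (Hc x (conj X1 X3)) as [i [Hi [I1 I2]]].
        exists i. split; [|lra]. apply in_in_remove; auto. intros ->. lra. }
    lra.
Qed.

(* Heine-Borel for [[0, b]]: the supremum of the points up to which finitely many of the
   open intervals suffice is [b] itself. *)
Lemma interval_finite_subcover (b : R) (al be : nat -> R) : 0 <= b ->
  (forall u, 0 <= u <= b -> exists i, al i < u < be i) ->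
  exists n, forall u, 0 <= u <= b -> exists i, (i <= n)%nat /\ al i < u < be i.
Proof.
  intros Hb Hc.
  set (Good := fun x => 0 <= x <= b /\ exists n, forall y, 0 <= y <= x ->
                 exists i, (i <= n)%nat /\ al i < y < be i).
  assert (HG0 : Good 0).
  { split; [lra|]. destruct (Hc 0 ltac:(lra)) as [i0 Hi0]. exists i0. intros y Hy.
    exists i0. split; [lia|]. replace y with 0 by lra. auto. }
  destruct (completeness Good (ex_intro _ b (fun x Hx => proj2 (proj1 Hx))) (ex_intro _ 0 HG0))
    as [c [Hub Hlub]].
  assert (Hc0 : 0 <= c) by (apply Hub; auto).
  assert (Hcb : c <= b) by (apply Hlub; intros x [Hx _]; lra).
  destruct (Hc c ltac:(lra)) as [j [J1 J2]].
  set (eta := Rmin (c - al j) (be j - c)).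
  assert (Heta : 0 < eta) by (unfold eta; apply Rmin_glb_lt; lra).
  assert (E1 : eta <= c - al j) by apply Rmin_l. assert (E2 : eta <= be j - c) by apply Rmin_r.
  assert (Hx : exists x, Good x /\ c - eta < x).
  { apply NNPP. intros Hn. assert (c <= c - eta); [|lra].
    apply Hlub. intros x Gx. destruct (Rle_lt_dec x (c - eta)) as [H|H]; auto.
    exfalso; apply Hn; exists x; auto. }
  destruct Hx as [x [[Gx1 [n Hn]] Hxc]].
  set (y0 := Rmin b (c + eta / 2)).
  assert (Hy0 : Good y0).
  { split; [split; [unfold y0; apply Rmin_glb; lra | apply Rmin_l]|].
    exists (Nat.max n j). intros y [Y1 Y2].
    destruct (Rle_lt_dec y x) as [Hyx|Hyx].
    - destruct (Hn y (conj Y1 Hyx)) as [i [Hi HI]]. exists i. split; [lia| auto].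
    - exists j. split; [lia|]. assert (y0 <= c + eta/2) by apply Rmin_r. lra. }
  assert (Hy0b : y0 = b).
  { pose proof (Hub y0 Hy0). unfold y0 in *. destruct (Rle_dec b (c + eta/2)).
    - rewrite Rmin_left; auto.
    - rewrite Rmin_right in H; lra. }
  rewrite Hy0b in Hy0. destruct Hy0 as [_ [n' Hn']]. exists n'. exact Hn'.
Qed.

(* Lebesgue's inequality: enlarge the [i]-th interval by [eps 2^-(i+1)], extract a finite
   subcover and compare lengths. *)
Lemma interval_cover_length (b A : R) (l r : nat -> R) : 0 <= b ->
  (forall u, 0 <= u <= b -> exists i, l i <= u <= r i) ->
  (forall n, sum_f_R0 (fun i => Rmax 0 (r i - l i)) n <= A) -> b <= A.
Proof.
  intros Hb Hcov HA.
  destruct (Rle_lt_dec b A) as [H|H]; auto. exfalso.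
  set (eps := (b - A) / 4).
  set (w := fun i => eps * (1/2)^(S i)).
  assert (Hw : forall i, 0 < w i)
    by (intros; apply Rmult_lt_0_compat; [unfold eps; lra | apply pow_lt; lra]).
  set (al := fun i => l i - w i). set (be := fun i => r i + w i).
  destruct (interval_finite_subcover b al be Hb) as [n Hn].
  { intros u Hu. destruct (Hcov u Hu) as [i Hi]. exists i. unfold al, be. specialize (Hw i). lra. }
  assert (Hle : b - 0 <= sum_f_R0 (fun i => Rmax 0 (be i - al i)) n).
  { rewrite <- lsum_seq. apply finite_cover_length. intros x Hx.
    destruct (Hn x Hx) as [i [Hi HI]]. exists i. split; auto. apply in_seq. lia. }
  assert (Hsum : sum_f_R0 (fun i => Rmax 0 (be i - al i)) n <=
                 sum_f_R0 (fun i => Rmax 0 (r i - l i)) n + sum_f_R0 (fun i => 2 * w i) n).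
  { rewrite <- sum_plus. apply sum_Rle. intros i _. unfold al, be. specialize (Hw i).
    unfold Rmax. destruct (Rle_dec 0 (r i - l i)); destruct (Rle_dec 0 _); lra. }
  assert (Hgeo : sum_f_R0 (fun i => 2 * w i) n <= 2 * eps).
  { unfold w. rewrite (sum_eq _ (fun i => (1/2)^(S i) * (2 * eps))) by (intros; ring).
    rewrite <- scal_sum. pose proof (geom_half_sum n). unfold eps. nra. }
  specialize (HA n). unfold eps in *. lra.
Qed.

(** * The Lüroth map: digits, cylinders and separation of neighbouring cylinders *)

Definition Liter (n : nat) (x : R) : R := Nat.iter n luroth_map x.

Lemma digit_S (n : nat) (x : R) : luroth_digit (S n) x = luroth_a1 (Liter n x).
Proof. unfold luroth_digit, Liter. replace (S n - 1)%nat with n by lia. reflexivity. Qed.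

Lemma INR_ge2 (a : nat) : (2 <= a)%nat -> 2 <= INR a.
Proof. intros; replace 2 with (INR 2) by (simpl; lra); apply le_INR; auto. Qed.

Lemma a1_spec (x : R) : 0 < x <= 1 ->
  (2 <= luroth_a1 x)%nat /\
  / INR (luroth_a1 x) < x <= / (INR (luroth_a1 x) - 1) /\
  luroth_map x = INR (luroth_a1 x) * (INR (luroth_a1 x) - 1) * x - (INR (luroth_a1 x) - 1).
Proof.
  intros [Hx0 Hx1].
  unfold luroth_a1, luroth_map, lfloor_inv.
  set (k := Int_part (/ x)).
  destruct (base_Int_part (/ x)) as [B1 B2]. fold k in B1, B2.
  assert (Hix : 1 <= / x) by (replace 1 with (/ 1) by field; apply Rinv_le_contravar; lra).
  assert (Hk : (1 <= k)%Z) by (assert (0 < IZR k) by lra; apply lt_0_IZR in H; lia).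
  assert (HI : INR (Z.to_nat k + 1) = IZR k + 1).
  { rewrite plus_INR, INR_Z_to_nat by lia. simpl. lra. }
  rewrite HI.
  assert (Hk1 : 1 <= IZR k) by (apply IZR_le; lia).
  assert (Hxk : IZR k * x <= 1 < (IZR k + 1) * x).
  { split.
    - apply (Rmult_le_reg_l (/ x)); [apply Rinv_0_lt_compat; lra|].
      replace (/ x * (IZR k * x)) with (IZR k) by (field; lra). lra.
    - apply (Rmult_lt_reg_l (/ x)); [apply Rinv_0_lt_compat; lra|].
      replace (/ x * ((IZR k + 1) * x)) with (IZR k + 1) by (field; lra). lra. }
  split; [lia|]. split; [split|].
  - apply (Rmult_lt_reg_l (IZR k + 1)); [lra|]. rewrite Rinv_r by lra. lra.
  - replace (IZR k + 1 - 1) with (IZR k) by ring.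
    apply (Rmult_le_reg_l (IZR k)); [lra|]. rewrite Rinv_r by lra. lra.
  - ring.
Qed.

Lemma a1_char (x : R) (a : nat) : (2 <= a)%nat ->
  / INR a < x <= / (INR a - 1) -> luroth_a1 x = a.
Proof.
  intros Ha [H1 H2]. pose proof (INR_ge2 a Ha) as HA.
  assert (Hx0 : 0 < x) by (apply Rlt_trans with (/ INR a); auto; apply Rinv_0_lt_compat; lra).
  assert (Hxa : (INR a - 1) * x <= 1 < INR a * x).
  { split.
    - apply (Rmult_le_compat_l (INR a - 1)) in H2; [|lra]. rewrite Rinv_r in H2 by lra. lra.
    - apply (Rmult_lt_compat_l (INR a)) in H1; [|lra]. rewrite Rinv_r in H1 by lra. lra. }
  unfold luroth_a1, lfloor_inv.
  assert (Int_part (/ x) = Z.of_nat a - 1)%Z.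
  { apply Int_part_unique. rewrite minus_IZR, <- INR_IZR_INZ. simpl. split.
    - apply (Rmult_le_reg_l x); auto. rewrite Rinv_r by lra. lra.
    - apply (Rmult_lt_reg_l x); auto. rewrite Rinv_r by lra. lra. }
  rewrite H. lia.
Qed.

Lemma L_range (x : R) : 0 < x <= 1 -> 0 < luroth_map x <= 1.
Proof.
  intros Hx. destruct (a1_spec x Hx) as [Ha [[H1 H2] H3]]. rewrite H3.
  set (a := INR (luroth_a1 x)) in *. pose proof (INR_ge2 _ Ha) as HA. fold a in HA.
  apply (Rmult_lt_compat_l a) in H1; [|lra]. rewrite Rinv_r in H1 by lra.
  apply (Rmult_le_compat_l (a - 1)) in H2; [|lra]. rewrite Rinv_r in H2 by lra.
  split; nra.
Qed.

Lemma Liter_range (n : nat) (x : R) : 0 < x <= 1 -> 0 < Liter n x <= 1.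
Proof. intros H; induction n; simpl; auto. apply L_range; auto. Qed.

Definition lq (a : nat) : R := INR a * (INR a - 1).

Lemma lq_pos (a : nat) : (2 <= a)%nat -> 0 < lq a.
Proof. intros H; apply INR_ge2 in H; unfold lq; nra. Qed.

(* Length [prod_{k<n} 1/(a_k (a_k - 1))] of the rank-[n] cylinder containing [x]. *)
Fixpoint cyl_len (x : R) (n : nat) : R :=
  match n with O => 1 | S m => cyl_len x m / lq (luroth_a1 (Liter m x)) end.

Definition same_digits (n : nat) (x y : R) : Prop :=
  forall k, (k < n)%nat -> luroth_a1 (Liter k x) = luroth_a1 (Liter k y).

Lemma cyl_len_pos (x : R) (n : nat) : 0 < x <= 1 -> 0 < cyl_len x n.
Proof.
  intros H; induction n; simpl; [lra|].
  destruct (a1_spec _ (Liter_range n x H)) as [Ha _].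
  apply Rdiv_lt_0_compat; auto. apply lq_pos; auto.
Qed.

Lemma cylinder_diff (n : nat) (x y : R) : 0 < x <= 1 -> 0 < y <= 1 -> same_digits n x y ->
  x - y = cyl_len x n * (Liter n x - Liter n y).
Proof.
  intros Hx Hy. induction n; intros Hag; [simpl; ring|].
  rewrite IHn by (intros k Hk; apply Hag; lia). simpl cyl_len.
  change (Liter (S n) x) with (luroth_map (Liter n x)).
  change (Liter (S n) y) with (luroth_map (Liter n y)).
  destruct (a1_spec _ (Liter_range n x Hx)) as [Ha [_ Ex]].
  destruct (a1_spec _ (Liter_range n y Hy)) as [_ [_ Ey]].
  rewrite Ex, Ey, <- (Hag n (Nat.lt_succ_diag_r n)).
  pose proof (INR_ge2 _ Ha). unfold lq. field. lra.
Qed.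

Lemma digit_gap (X Y A : R) : 0 < X <= 1 -> 0 < Y <= 1 ->
  (luroth_a1 Y < luroth_a1 X)%nat -> luroth_map X <= 1/3 -> INR (luroth_a1 X) <= A ->
  2 / (3 * A^2) <= Y - X /\ INR (luroth_a1 X) - INR (luroth_a1 Y) <= 1 + A^2 * (Y - X).
Proof.
  intros HX HY Hlt HL HA.
  destruct (a1_spec X HX) as [Ha [[X1 X2] X3]]. destruct (a1_spec Y HY) as [Hb [[Y1 Y2] Y3]].
  set (a := INR (luroth_a1 X)) in *. set (b := INR (luroth_a1 Y)) in *.
  assert (Hab : b <= a - 1).
  { unfold a, b. assert (INR (S (luroth_a1 Y)) <= INR (luroth_a1 X)) by (apply le_INR; lia).
    rewrite S_INR in H. lra. }
  assert (Ha2 : 2 <= a) by (apply INR_ge2; auto). assert (Hb2 : 2 <= b) by (apply INR_ge2; auto).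
  assert (Xup : a * (a - 1) * X <= 1/3 + (a - 1)) by lra.
  assert (Ylo : / (a - 1) <= Y) by (apply Rle_trans with (/ b); [apply Rinv_le_contravar|]; lra).
  assert (Gap : 2 / 3 <= a * (a - 1) * (Y - X)).
  { assert (a * (a - 1) * / (a - 1) <= a * (a - 1) * Y).
    { apply Rmult_le_compat_l; [nra | lra]. }
    replace (a * (a - 1) * / (a - 1)) with a in H by (field; lra). lra. }
  assert (Far : a - 1 - b <= b * (a - 1) * (Y - X)).
  { assert (b * (a - 1) * / b <= b * (a - 1) * Y) by (apply Rmult_le_compat_l; nra).
    assert (b * (a - 1) * X <= b * (a - 1) * / (a - 1)) by (apply Rmult_le_compat_l; nra).
    replace (b * (a - 1) * / b) with (a - 1) in H by (field; lra).
    replace (b * (a - 1) * / (a - 1)) with b in H0 by (field; lra). lra. }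
  assert (HYX : 0 < Y - X) by nra.
  assert (HqA : a * (a - 1) <= A^2) by nra.
  split.
  - apply (Rmult_le_reg_l (3 * A^2)); [nra|].
    replace (3 * A ^ 2 * (2 / (3 * A ^ 2))) with 2 by (field; nra). nra.
  - assert (b * (a - 1) * (Y - X) <= A^2 * (Y - X)) by (apply Rmult_le_compat_r; nra). lra.
Qed.

Lemma digit_gap_abs (X Y A : R) : 0 < X <= 1 -> 0 < Y <= 1 ->
  luroth_map X <= 1/3 -> luroth_map Y <= 1/3 ->
  INR (luroth_a1 X) <= A -> INR (luroth_a1 Y) <= A ->
  (luroth_a1 X <> luroth_a1 Y -> 2 / (3 * A^2) <= Rabs (X - Y)) /\
  Rabs (INR (luroth_a1 X) - INR (luroth_a1 Y)) <= 1 + A^2 * Rabs (X - Y).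
Proof.
  intros HX HY LX LY AX AY.
  assert (HA2 : 0 <= A^2) by (apply pow2_ge_0).
  destruct (lt_eq_lt_dec (luroth_a1 Y) (luroth_a1 X)) as [[Hlt|Heq]|Hgt].
  - destruct (digit_gap X Y A HX HY Hlt LX AX) as [G1 G2].
    assert (INR (luroth_a1 Y) < INR (luroth_a1 X)) by (apply lt_INR; auto).
    pose proof (INR_ge2 _ (proj1 (a1_spec X HX))).
    assert (0 < 2 / (3 * A ^ 2)) by (apply Rdiv_lt_0_compat; nra).
    rewrite Rabs_minus_sym, (Rabs_pos_eq (Y - X)), Rabs_pos_eq by lra. auto.
  - rewrite Heq, Rminus_diag, Rabs_R0. pose proof (Rabs_pos (X - Y)).
    split; [congruence | nra].
  - destruct (digit_gap Y X A HY HX Hgt LY AY) as [G1 G2].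
    assert (INR (luroth_a1 X) < INR (luroth_a1 Y)) by (apply lt_INR; auto).
    pose proof (INR_ge2 _ (proj1 (a1_spec Y HY))).
    assert (0 < 2 / (3 * A ^ 2)) by (apply Rdiv_lt_0_compat; nra).
    rewrite (Rabs_pos_eq (X - Y)), Rabs_left by lra. split; [auto | lra].
Qed.

(** * Every digit sequence with digits [>= 4] is the Lüroth expansion of a point

   For digits [d_1, d_2, ...] the candidate tails are the Lüroth series
   [z_n = sum_j (1/d_{n+j+1}) prod_{i=1..j} 1/(d_{n+i}(d_{n+i}-1))]; they satisfy
   [z_n = 1/d_{n+1} + z_{n+1}/(d_{n+1}(d_{n+1}-1))], which forces the first digit of
   [z_n] to be [d_{n+1}] and [L z_n = z_{n+1}]. *)

Lemma Series_nonneg (b : nat -> R) : (forall n, 0 <= b n) -> ex_series b -> 0 <= Series b.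
Proof.
  intros H He.
  replace 0 with (Series (fun n => 0 * b n)) by (rewrite Series_scal_l; ring).
  apply Series_le; auto. intros; split; [lra | rewrite Rmult_0_l; apply H].
Qed.

Section Realization.

Variable d : nat -> nat.
Hypothesis hd4 : forall k, (1 <= k)%nat -> (4 <= d k)%nat.

Lemma d_ge4 (k : nat) : (1 <= k)%nat -> 4 <= INR (d k).
Proof. intros Hk. replace 4 with (INR 4) by (simpl; lra). apply le_INR, hd4, Hk. Qed.

Lemma lq_d_ge12 (k : nat) : (1 <= k)%nat -> 12 <= lq (d k).
Proof. intros Hk. pose proof (d_ge4 k Hk). unfold lq. nra. Qed.

Fixpoint weight (j n : nat) : R :=
  match j with O => 1 | S j' => weight j' (S n) / lq (d (S n)) end.

Lemma weight_bound (j n : nat) : 0 < weight j n <= (1/12)^j.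
Proof.
  revert n. induction j; intros n; simpl; [lra|].
  destruct (IHj (S n)) as [A B]. pose proof (lq_d_ge12 (S n) ltac:(lia)).
  split; [apply Rdiv_lt_0_compat; lra|].
  apply Rle_trans with ((1/12)^j * /12); [| right; field].
  apply Rmult_le_compat; [lra | apply Rlt_le, Rinv_0_lt_compat; lra | lra |].
  apply Rinv_le_contravar; lra.
Qed.

Definition tail_term (n j : nat) : R := / INR (d (S (n + j))) * weight j n.

(* The tail series is dominated by a geometric series of sum [3/11]. *)
Lemma tail_term_bound (n j : nat) : 0 <= tail_term n j <= / 4 * (1/12)^j.
Proof.
  unfold tail_term. destruct (weight_bound j n) as [A B].
  pose proof (d_ge4 (S (n + j)) ltac:(lia)).
  split; [apply Rmult_le_pos; [apply Rlt_le, Rinv_0_lt_compat; lra | lra]|].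
  apply Rmult_le_compat;
    [apply Rlt_le, Rinv_0_lt_compat; lra | lra | apply Rinv_le_contravar; lra | lra].
Qed.

Lemma ex_series_geom_quarter : ex_series (fun j => / 4 * (1/12)^j).
Proof.
  apply (@ex_series_scal_l R_AbsRing R_NormedModule (/4) (fun j => (1/12)^j)).
  apply ex_series_geom. rewrite Rabs_pos_eq; lra.
Qed.

Lemma ex_series_tail (n : nat) : ex_series (tail_term n).
Proof.
  apply (@ex_series_le R_AbsRing R_CompleteNormedModule (tail_term n) (fun j => / 4 * (1/12)^j));
    [| exact ex_series_geom_quarter].
  intros j. change (norm (tail_term n j)) with (Rabs (tail_term n j)).
  rewrite Rabs_pos_eq; apply tail_term_bound.
Qed.

(* The candidate point [L^n x] for the point [x] with digits [d]. *)
Definition tail (n : nat) : R := Series (tail_term n).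

Lemma tail_bounds (n : nat) : 0 <= tail n <= 3/11.
Proof.
  split; [apply Series_nonneg; [apply tail_term_bound | apply ex_series_tail]|].
  apply Rle_trans with (Series (fun j => / 4 * (1/12)^j)).
  - apply Series_le; [apply tail_term_bound | apply ex_series_geom_quarter].
  - rewrite Series_scal_l, Series_geom by (rewrite Rabs_pos_eq; lra). lra.
Qed.

(* Peeling off the first term: the tails satisfy the inverse of the Lüroth map. *)
Lemma tail_rec (n : nat) : tail n = / INR (d (S n)) + tail (S n) / lq (d (S n)).
Proof.
  unfold tail. rewrite Series_incr_1 by apply ex_series_tail.
  f_equal; [unfold tail_term; simpl; rewrite Nat.add_0_r; ring|].
  unfold Rdiv. rewrite <- Series_scal_r. apply Series_ext. intros j. unfold tail_term. simpl.
  replace (n + S j)%nat with (S n + j)%nat by lia. unfold Rdiv. rewrite Rmult_assoc. reflexivity.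
Qed.

Lemma tail_pos (n : nat) : 0 < tail n.
Proof.
  rewrite tail_rec. pose proof (d_ge4 (S n) ltac:(lia)). pose proof (lq_d_ge12 (S n) ltac:(lia)).
  pose proof (proj1 (tail_bounds (S n))).
  assert (0 < / INR (d (S n))) by (apply Rinv_0_lt_compat; lra).
  assert (0 <= tail (S n) / lq (d (S n))) by (apply Rdiv_le_0_compat; lra). lra.
Qed.

(* The recursion for the tails says exactly that [tail n] has first digit [d (S n)] and
   that [L] shifts it to [tail (S n)]. *)
Lemma tail_step (n : nat) : luroth_a1 (tail n) = d (S n) /\ luroth_map (tail n) = tail (S n).
Proof.
  pose proof (d_ge4 (S n) ltac:(lia)) as Hd.
  pose proof (tail_pos (S n)) as Hw0. pose proof (proj2 (tail_bounds (S n))) as Hw1.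
  pose proof (tail_rec n) as Hrec. unfold lq in Hrec.
  set (a := INR (d (S n))) in *. set (w := tail (S n)) in *.
  assert (Hchar : / a < tail n <= / (a - 1)).
  { assert (/ (a - 1) = / a + 1 / (a * (a - 1))) by (field; lra).
    assert (0 < w / (a * (a - 1))) by (apply Rdiv_lt_0_compat; nra).
    assert (w / (a * (a - 1)) <= 1 / (a * (a - 1))).
    { apply Rmult_le_compat_r; [apply Rlt_le, Rinv_0_lt_compat; nra | lra]. }
    lra. }
  assert (He : luroth_a1 (tail n) = d (S n)) by (apply a1_char; auto; pose proof (hd4 (S n)); lia).
  split; auto.
  assert (Hz : 0 < tail n <= 1) by (split; [apply tail_pos | pose proof (tail_bounds n); lra]).
  destruct (a1_spec _ Hz) as [_ [_ E3]]. rewrite E3, He. fold a. rewrite Hrec. field. lra.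
Qed.

Lemma realize : exists x, 0 < x <= 1 /\ forall k, luroth_a1 (Liter k x) = d (S k).
Proof.
  exists (tail O). split; [split; [apply tail_pos | pose proof (tail_bounds O); lra]|].
  assert (HL : forall k, Liter k (tail O) = tail k).
  { induction k; [reflexivity|]. change (Liter (S k) (tail O)) with (luroth_map (Liter k (tail O))).
    rewrite IHk. apply tail_step. }
  intros k. rewrite HL. apply tail_step.
Qed.

End Realization.

Section TargetSet.

Variable s : nat -> nat.
Hypothesis hs4 : forall n, (1 <= n)%nat -> (4 <= s n)%nat.
Hypothesis hsinf : forall M : nat, exists K : nat, forall n, (K <= n)%nat -> (M <= s n)%nat.

Lemma s_ge4 (k : nat) : (1 <= k)%nat -> 4 <= INR (s k).
Proof. intros Hk. replace 4 with (INR 4) by (simpl; lra). apply le_INR, hs4, Hk. Qed.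

Lemma prod_s_ge1 (n : nat) : 1 <= prod_s s n.
Proof. induction n; simpl; [lra|]. pose proof (s_ge4 (S n) ltac:(lia)). nra. Qed.

Lemma prod_s_ge4 (m : nat) : (1 <= m)%nat -> 4 <= prod_s s m.
Proof.
  intros Hm. destruct m; [lia|]. simpl.
  pose proof (prod_s_ge1 m). pose proof (s_ge4 (S m) ltac:(lia)). nra.
Qed.

Lemma prod_s_pow (B K : nat) : (forall k, (K <= k)%nat -> (B <= s k)%nat) ->
  forall m, (K <= m)%nat -> INR B ^ (m - K) <= prod_s s m.
Proof.
  intros HB m Hm. induction Hm; [rewrite Nat.sub_diag; apply prod_s_ge1|].
  replace (S m - K)%nat with (S (m - K)) by lia. simpl.
  assert (INR B <= INR (s (S m))) by (apply le_INR, HB; lia).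
  pose proof (pos_INR B). pose proof (pow_le (INR B) (m - K) (pos_INR B)).
  rewrite Rmult_comm. apply Rmult_le_compat; auto.
Qed.

Lemma ln_prod_superlinear (C : R) :
  exists K, forall m, (K <= m)%nat -> C * (INR m + 1) <= ln (prod_s s m).
Proof.
  destruct (nat_ln_above (2 * Rmax C 0)) as [B [HB1 HlnB]].
  destruct (hsinf B) as [K0 HK0].
  exists (2 * K0 + 1)%nat. intros m Hm.
  assert (HBpos : 0 < INR B) by (apply (lt_INR 0); lia).
  assert (Hp : INR (m - K0) * ln (INR B) <= ln (prod_s s m)).
  { rewrite <- ln_pow by auto. apply ln_le; [apply pow_lt; auto|]. apply prod_s_pow; auto; lia. }
  rewrite minus_INR in Hp by lia.
  assert (HmK : 2 * INR K0 + 1 <= INR m).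
  { replace (2 * INR K0 + 1) with (INR (2 * K0 + 1)) by (rewrite plus_INR, mult_INR; simpl; ring).
    apply le_INR; auto. }
  pose proof (Rmax_l C 0). pose proof (Rmax_r C 0). pose proof (pos_INR K0).
  assert (C * (INR m + 1) <= Rmax C 0 * (INR m + 1)) by (apply Rmult_le_compat_r; lra).
  assert (Rmax C 0 * (INR m + 1) <= Rmax C 0 * (2 * (INR m - INR K0)))
    by (apply Rmult_le_compat_l; lra).
  assert (2 * Rmax C 0 * (INR m - INR K0) <= ln (INR B) * (INR m - INR K0))
    by (apply Rmult_le_compat_r; lra).
  lra.
Qed.

Lemma s0_parts_pos (m : nat) : (1 <= m)%nat -> 0 < ln (prod_s s m) /\ 0 < ln (INR (s (S m))).
Proof.
  intros Hm. pose proof (prod_s_ge4 m Hm). pose proof (s_ge4 (S m) ltac:(lia)).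
  split; apply ln_gt0; lra.
Qed.

Lemma s0_term_range (m : nat) : (1 <= m)%nat -> 0 <= s0_term s m <= 1/2.
Proof.
  intros Hm. destruct (s0_parts_pos m Hm) as [Hp Hs]. unfold s0_term.
  split; [apply Rdiv_le_0_compat; lra|].
  apply (Rmult_le_reg_r (2 * ln (prod_s s m) + ln (INR (s (S m))))); [lra|].
  unfold Rdiv. rewrite Rmult_assoc, Rinv_l by lra. lra.
Qed.

Lemma s0_term_lt (m : nat) (t : R) : (1 <= m)%nat -> s0_term s m < t ->
  ln (prod_s s m) < t * (2 * ln (prod_s s m) + ln (INR (s (S m)))).
Proof.
  intros Hm H. destruct (s0_parts_pos m Hm) as [Hp Hs]. unfold s0_term in H.
  apply (Rmult_lt_compat_r (2 * ln (prod_s s m) + ln (INR (s (S m))))) in H; [|lra].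
  unfold Rdiv in H. rewrite Rmult_assoc, Rinv_l in H by lra. lra.
Qed.

Lemma s0_term_gt (m : nat) (t : R) : (1 <= m)%nat -> t < s0_term s m ->
  t * (2 * ln (prod_s s m) + ln (INR (s (S m)))) < ln (prod_s s m).
Proof.
  intros Hm H. destruct (s0_parts_pos m Hm) as [Hp Hs]. unfold s0_term in H.
  apply (Rmult_lt_compat_r (2 * ln (prod_s s m) + ln (INR (s (S m))))) in H; [|lra].
  unfold Rdiv in H. rewrite Rmult_assoc, Rinv_l in H by lra. lra.
Qed.

Variable N : nat.
Hypothesis hN : (2 <= N)%nat.

Lemma N_ge2 : 2 <= INR N.
Proof. apply INR_ge2, hN. Qed.

Definition Ein (x : R) : Prop :=
  0 < x <= 1 /\ forall n, (1 <= n)%nat ->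
    (s n <= luroth_digit n x)%nat /\ (luroth_digit n x <= N * s n - 1)%nat.

Lemma Ein_digit (x : R) (k : nat) : Ein x ->
  (s (S k) <= luroth_a1 (Liter k x))%nat /\ (luroth_a1 (Liter k x) <= N * s (S k) - 1)%nat.
Proof. intros [_ H]. rewrite <- digit_S. apply H. lia. Qed.

Lemma Ein_digit_real (x : R) (k : nat) : Ein x ->
  INR (s (S k)) <= INR (luroth_a1 (Liter k x)) <= INR N * INR (s (S k)) - 1.
Proof.
  intros HE. destruct (Ein_digit x k HE) as [D1 D2]. pose proof (hs4 (S k) ltac:(lia)).
  split; [apply le_INR; auto|].
  apply le_INR in D2. rewrite minus_INR, mult_INR in D2 by nia. simpl in D2. lra.
Qed.

Lemma cyl_len_bounds (x : R) (n : nat) : Ein x ->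
  cyl_len x n * (prod_s s n)^2 <= (4/3)^n /\ 1 <= cyl_len x n * (INR N ^ n * prod_s s n)^2.
Proof.
  intros HE. induction n; simpl; [lra|].
  destruct IHn as [I1 I2].
  pose proof (Ein_digit_real x n HE) as [Sa aN]. pose proof (s_ge4 (S n) ltac:(lia)).
  pose proof N_ge2. unfold lq.
  set (a := INR (luroth_a1 (Liter n x))) in *. set (sv := INR (s (S n))) in *.
  set (B := cyl_len x n) in *. set (P := prod_s s n) in *. set (Nn := INR N ^ n) in *.
  assert (HB : 0 < B) by (apply cyl_len_pos, HE).
  assert (HP : 1 <= P) by apply prod_s_ge1.
  assert (Hqa : sv * (sv - 1) <= a * (a - 1) <= (INR N * sv)^2) by (split; nra).
  split.
  - replace (B / (a * (a - 1)) * (P * sv * (P * sv * 1)))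
      with (B * P^2 * (sv * sv / (a * (a - 1)))) by (field; nra).
    replace (4/3 * (4/3)^n) with ((4/3)^n * (4/3)) by ring.
    apply Rmult_le_compat; [nra | | lra |].
    + apply Rdiv_le_0_compat; nra.
    + apply (Rmult_le_reg_r (a * (a - 1))); [nra|].
      unfold Rdiv. rewrite Rmult_assoc, Rinv_l by nra. nra.
  - replace (B / (a * (a - 1)) * (INR N * Nn * (P * sv) * (INR N * Nn * (P * sv) * 1)))
      with (B * (Nn * P)^2 * ((INR N * sv)^2 / (a * (a - 1)))) by (field; nra).
    apply Rle_trans with (1 * 1); [lra|]. apply Rmult_le_compat; [lra | lra | lra |].
    apply (Rmult_le_reg_r (a * (a - 1))); [nra|].
    unfold Rdiv. rewrite Rmult_assoc, Rinv_l by nra. lra.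
Qed.

Lemma Liter_upper (x : R) (m : nat) : Ein x -> 0 < Liter m x <= / (INR (s (S m)) - 1).
Proof.
  intros HE. pose proof (Liter_range m x (proj1 HE)) as HR.
  destruct (a1_spec _ HR) as [_ [[_ H2] _]].
  pose proof (Ein_digit_real x m HE) as [D1 _]. pose proof (s_ge4 (S m) ltac:(lia)).
  split; [lra|]. apply Rle_trans with (1 := H2). apply Rinv_le_contravar; lra.
Qed.

(* In particular [L^(n+1) x <= 1/3] on [E], which drives the separation lemma. *)
Lemma Liter_small (x : R) (n : nat) : Ein x -> luroth_map (Liter n x) <= 1/3.
Proof.
  intros HE. apply Rle_trans with (/ (INR (s (S (S n))) - 1)); [apply (Liter_upper x (S n) HE)|].
  pose proof (s_ge4 (S (S n)) ltac:(lia)).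
  replace (1/3) with (/ (4 - 1)) by field. apply Rinv_le_contravar; lra.
Qed.

Lemma level_gap (x y : R) (n : nat) : Ein x -> Ein y -> same_digits n x y ->
  (luroth_a1 (Liter n x) <> luroth_a1 (Liter n y) ->
     2/3 * cyl_len x n / (INR N * INR (s (S n)))^2 <= Rabs (x - y)) /\
  Rabs (INR (luroth_a1 (Liter n x)) - INR (luroth_a1 (Liter n y))) <=
     1 + (INR N * INR (s (S n)))^2 * Rabs (x - y) / cyl_len x n.
Proof.
  intros HEx HEy Hag.
  pose proof (cylinder_diff n x y (proj1 HEx) (proj1 HEy) Hag) as Hdiff.
  assert (HB : 0 < cyl_len x n) by (apply cyl_len_pos, HEx).
  pose proof (Ein_digit_real x n HEx). pose proof (Ein_digit_real y n HEy).
  destruct (digit_gap_abs (Liter n x) (Liter n y) (INR N * INR (s (S n))))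
    as [G1 G2]; try apply Liter_range; try apply Liter_small; try apply HEx; try apply HEy; try lra.
  assert (Habs : Rabs (x - y) = cyl_len x n * Rabs (Liter n x - Liter n y)).
  { rewrite Hdiff, Rabs_mult, Rabs_pos_eq by lra. reflexivity. }
  rewrite Habs. split.
  - intros Hne. specialize (G1 Hne).
    apply (Rmult_le_compat_l (cyl_len x n)) in G1; [|lra].
    apply Rle_trans with (2 := G1). right. field.
    pose proof N_ge2. pose proof (s_ge4 (S n) ltac:(lia)). nra.
  - replace ((INR N * INR (s (S n)))^2 * (cyl_len x n * Rabs (Liter n x - Liter n y)) / cyl_len x n)
      with ((INR N * INR (s (S n)))^2 * Rabs (Liter n x - Liter n y)) by (field; lra).
    exact G2.
Qed.

(** ** Upper bound: covering [E] by its rank-[m] cylinders *)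

(* [Mn m = prod_{k<=m} (N-1) s_k] admissible digit strings of length [m]. *)
Fixpoint Mn (k : nat) : nat :=
  match k with O => 1%nat | S k' => (Mn k' * ((N - 1) * s (S k')))%nat end.

(* Mixed-radix index in [[0, Mn k)] of the first [k] digits of a point of [E]. *)
Fixpoint cyl_index (x : R) (k : nat) : nat :=
  match k with
  | O => O
  | S k' => (cyl_index x k' + Mn k' * (luroth_a1 (Liter k' x) - s (S k')))%nat
  end.

Lemma cyl_index_lt (x : R) (k : nat) : Ein x -> (cyl_index x k < Mn k)%nat.
Proof.
  intros HE; induction k; simpl; [lia|].
  destruct (Ein_digit x k HE) as [D1 D2]. pose proof (hs4 (S k) ltac:(lia)).
  assert (luroth_a1 (Liter k x) - s (S k) <= (N - 1) * s (S k) - 1)%nat by nia.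
  nia.
Qed.

Lemma divmod_unique (M q1 q2 r1 r2 : nat) : (r1 < M)%nat -> (r2 < M)%nat ->
  (r1 + M * q1 = r2 + M * q2)%nat -> q1 = q2 /\ r1 = r2.
Proof.
  intros H1 H2 H.
  assert (q1 = q2) by (destruct (lt_eq_lt_dec q1 q2) as [[C|C]|C]; auto; exfalso; nia).
  subst; split; auto; lia.
Qed.

Lemma cyl_index_inj (x y : R) (k : nat) : Ein x -> Ein y ->
  cyl_index x k = cyl_index y k -> same_digits k x y.
Proof.
  intros Hx Hy. induction k; intros He; [intros j Hj; lia|]. simpl in He.
  destruct (divmod_unique _ _ _ _ _ (cyl_index_lt x k Hx) (cyl_index_lt y k Hy) He) as [Q R].
  destruct (Ein_digit x k Hx) as [D1 _]. destruct (Ein_digit y k Hy) as [D2 _].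
  intros j Hj. destruct (Nat.eq_dec j k) as [->|Hne]; [lia | apply IHk; auto; lia].
Qed.

Lemma Mn_INR (k : nat) : INR (Mn k) = (INR N - 1)^k * prod_s s k.
Proof.
  induction k; [simpl; lra|]. cbn [Mn prod_s].
  rewrite !mult_INR, IHk, minus_INR by lia. change (INR 1) with 1. simpl. ring.
Qed.

(* Diameter bound [D_m = (4/3)^(m+1) / ((s_1...s_m)^2 s_(m+1))] for rank-[m] cylinders in [E]. *)
Definition Dm (m : nat) : R := (4/3)^(S m) / (prod_s s m ^ 2 * INR (s (S m))).

Lemma Dm_pos (m : nat) : 0 < Dm m.
Proof.
  unfold Dm. pose proof (prod_s_ge1 m). pose proof (s_ge4 (S m) ltac:(lia)).
  apply Rdiv_lt_0_compat; [apply pow_lt; lra | apply Rmult_lt_0_compat; [apply pow_lt|]; lra].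
Qed.

Lemma ln_Dm (m : nat) :
  ln (Dm m) = (INR m + 1) * ln (4/3) - (2 * ln (prod_s s m) + ln (INR (s (S m)))).
Proof.
  unfold Dm. pose proof (prod_s_ge1 m). pose proof (s_ge4 (S m) ltac:(lia)).
  assert (0 < prod_s s m ^ 2) by (apply pow_lt; lra).
  rewrite ln_div, ln_mult, !ln_pow, S_INR by (try apply pow_lt; try apply Rmult_lt_0_compat; lra).
  simpl INR. ring.
Qed.

Lemma cylinder_diam (x y : R) (m : nat) : Ein x -> Ein y -> same_digits m x y ->
  Rabs (x - y) <= Dm m.
Proof.
  intros Hx Hy Hag. rewrite (cylinder_diff m x y (proj1 Hx) (proj1 Hy) Hag).
  pose proof (Liter_upper x m Hx). pose proof (Liter_upper y m Hy).
  destruct (cyl_len_bounds x m Hx) as [B1 _]. pose proof (cyl_len_pos x m (proj1 Hx)) as B0.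
  pose proof (prod_s_ge1 m). pose proof (s_ge4 (S m) ltac:(lia)).
  rewrite Rabs_mult, (Rabs_pos_eq (cyl_len x m)) by lra.
  assert (Rabs (Liter m x - Liter m y) <= / (INR (s (S m)) - 1)) by (apply Rabs_le; lra).
  assert (/ (INR (s (S m)) - 1) <= (4/3) / INR (s (S m))).
  { apply (Rmult_le_reg_r ((INR (s (S m)) - 1) * INR (s (S m)))); [nra|]. field_simplify; lra. }
  assert (cyl_len x m <= (4/3)^m / prod_s s m ^ 2).
  { apply (Rmult_le_reg_r (prod_s s m ^ 2)); [nra|]. field_simplify; nra. }
  unfold Dm. apply Rle_trans with ((4/3)^m / prod_s s m ^ 2 * ((4/3) / INR (s (S m)))).
  - apply Rmult_le_compat; try lra. apply Rabs_pos.
  - right. simpl. field. lra.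
Qed.

Lemma cylinder_cover (m : nat) (t : R) : 0 < t ->
  exists U : nat -> (R -> Prop),
    (forall x, Ein x -> exists i, U i x) /\
    (forall i, Rbar_le (diam (U i)) (Finite (Dm m))) /\
    Rbar_le (Rbar_series (fun i => powt (real (diam (U i))) t))
            (Finite (INR (Mn m) * Rpower (Dm m) t)).
Proof.
  intros Ht.
  set (U := fun j x => Ein x /\ cyl_index x m = j).
  pose proof (Dm_pos m) as HD.
  assert (Hdist : forall j x y, U j x -> U j y -> Rabs (x - y) <= Dm m).
  { intros j x y [Hx Ex] [Hy Ey]. apply cylinder_diam; auto.
    apply cyl_index_inj; auto; congruence. }
  exists U. split; [|split].
  - intros x Hx. exists (cyl_index x m). split; auto.
  - intros i. apply diam_le; [lra|]. apply Hdist.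
  - apply Rbar_series_le, sum_finite_support.
    + left. apply exp_pos.
    + intros j. split; [apply powt_nonneg|]. apply powt_le; [lra | | auto].
      apply diam_le; [lra|]. apply Hdist.
    + intros j Hj.
      assert (Hr : real (diam (U j)) <= 0).
      { apply diam_le; [lra|]. intros x y [Hx Ex] _. exfalso.
        pose proof (cyl_index_lt x m Hx). lia. }
      unfold powt. destruct (Rle_dec _ 0); [reflexivity | lra].
Qed.

Lemma cover_cost_le (m : nat) (t t' : R) : (1 <= m)%nat -> 0 < t -> t' <= t ->
  s0_term s m < t' ->
  INR (Mn m) * Rpower (Dm m) t <=
  exp ((INR m + 1) * (ln (INR N - 1) + t * ln (4/3)) - 2 * (t - t') * ln (prod_s s m)).
Proof.
  intros Hm Ht Htt Hs. pose proof (s0_term_lt m t' Hm Hs) as Hlt.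
  destruct (s0_parts_pos m Hm) as [Hp Hsg].
  pose proof (prod_s_ge4 m Hm). pose proof N_ge2.
  assert (HlnN : 0 <= ln (INR N - 1)) by (apply ln_ge0; lra).
  rewrite Mn_INR. unfold Rpower. rewrite ln_Dm.
  replace ((INR N - 1) ^ m * prod_s s m) with (exp (INR m * ln (INR N - 1) + ln (prod_s s m))).
  2:{ rewrite exp_plus, <- ln_pow, !exp_ln by (try apply pow_lt; lra). reflexivity. }
  rewrite <- exp_plus. apply exp_le_mono.
  set (p := ln (prod_s s m)) in *. set (sg := ln (INR (s (S m)))) in *.
  assert (0 <= (t - t') * sg) by (apply Rmult_le_pos; lra). nra.
Qed.

Lemma Dm_small (delta : R) : 0 < delta -> exists K, forall m, (K <= m)%nat -> Dm m <= delta.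
Proof.
  intros Hdelta. destruct (ln_prod_superlinear ((Rabs (ln (4/3)) + Rabs (ln delta)) / 2)) as [K HK].
  exists (Nat.max K 1). intros m Hm. specialize (HK m ltac:(lia)).
  rewrite <- (exp_ln (Dm m)), <- (exp_ln delta) by (try apply Dm_pos; lra). apply exp_le_mono.
  rewrite ln_Dm. pose proof (proj2 (s0_parts_pos m ltac:(lia))).
  apply Rle_trans with ((INR m + 1) * ln (4/3) - 2 * ln (prod_s s m)); [lra|].
  apply linear_le_ln; [lra|]. lra.
Qed.

Lemma cover_cost_small (t t' eps : R) : 0 < t' < t -> 0 < eps ->
  exists K, forall m, (K <= m)%nat -> (1 <= m)%nat -> s0_term s m < t' ->
    INR (Mn m) * Rpower (Dm m) t <= eps.
Proof.
  intros Ht Heps. set (c0 := ln (INR N - 1) + t * ln (4/3)).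
  destruct (ln_prod_superlinear ((Rabs c0 + Rabs (ln eps)) / (2 * (t - t')))) as [K HK].
  exists K. intros m HKm Hm Hs. specialize (HK m HKm).
  eapply Rle_trans; [apply (cover_cost_le m t t'); auto; lra|].
  rewrite <- (exp_ln eps) by lra. apply exp_le_mono. fold c0. apply linear_le_ln; [lra|].
  apply (Rmult_le_compat_l (2 * (t - t'))) in HK; [|lra].
  replace (2 * (t - t') * ((Rabs c0 + Rabs (ln eps)) / (2 * (t - t')) * (INR m + 1)))
    with ((INR m + 1) * (Rabs c0 + Rabs (ln eps))) in HK by (field; lra). lra.
Qed.

Lemma hausdorff_null_above (t t' : R) : 0 < t' < t ->
  (forall K, exists m, (K <= m)%nat /\ (1 <= m)%nat /\ s0_term s m < t') ->
  hausdorff_measure t Ein = Finite 0.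
Proof.
  intros Ht Hfreq. apply hausdorff_measure_null. intros delta eps Hdelta Heps.
  destruct (Dm_small delta Hdelta) as [K1 HK1].
  destruct (cover_cost_small t t' eps Ht Heps) as [K2 HK2].
  destruct (Hfreq (Nat.max K1 K2)) as [m [HKm [Hm Hs]]].
  destruct (cylinder_cover m t ltac:(lra)) as [U [HU1 [HU2 HU3]]].
  exists U. split; [exact HU1 | split].
  - intros i. eapply Rbar_le_trans; [apply HU2|]. apply HK1. lia.
  - eapply Rbar_le_trans; [apply HU3|]. apply HK2; auto. lia.
Qed.

(** ** Lower bound, part 1: coding [[0, 1)] into [E] by a mixed-radix expansion

   With radices [mR k = (N-1) s_k], every [u] in [[0,1)] has digits [c_k] in
   [[0, (N-1) s_k)] with [u = sum_k c_k mu_k], [mu_k = 1/(mR 1 ... mR k)]; the Lüroth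
   digits [s_k + c_k] are admissible for [E], so [u] is coded by a point of [E]. *)

Definition mR (k : nat) : R := INR ((N - 1) * s k).

(* [mu k = 1 / (mR 1 ... mR k)] is the width of a rank-[k] code cell. *)
Fixpoint mu (k : nat) : R := match k with O => 1 | S k' => mu k' / mR (S k') end.

(* [rem u k] is the fractional remainder of [u] after its first [k] mixed-radix digits. *)
Fixpoint rem (u : R) (k : nat) : R :=
  match k with
  | O => u
  | S k' => mR (S k') * rem u k' - INR (nfloor (mR (S k') * rem u k'))
  end.

(* The Lüroth digit sequence coding [u]: [s_k] plus the [k]-th mixed-radix digit of [u]. *)
Definition udig (u : R) (k : nat) : nat := (s k + nfloor (mR k * rem u (Nat.pred k)))%nat.

Fixpoint base (dg : nat -> nat) (n : nat) : R :=
  match n with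
  | O => 0
  | S n' => base dg n' + (INR (dg (S n')) - INR (s (S n'))) * mu (S n')
  end.

(* Size bounds for radices and cell widths; [mu n <= 1/(s_1...s_n)] since [mu n Mn n = 1]. *)
Lemma mR_ge (k : nat) : (1 <= k)%nat -> INR (s k) <= mR k /\ 4 <= mR k.
Proof.
  intros Hk. pose proof (hs4 k Hk). unfold mR.
  split; [apply le_INR; nia|]. replace 4 with (INR 4) by (simpl; lra). apply le_INR. nia.
Qed.

Lemma mu_pos (k : nat) : 0 < mu k.
Proof.
  induction k; simpl; [lra|].
  apply Rdiv_lt_0_compat; auto. pose proof (mR_ge (S k) ltac:(lia)). lra.
Qed.

Lemma mu_Mn (n : nat) : mu n * INR (Mn n) = 1.
Proof.
  induction n; simpl mu; simpl Mn; [simpl; lra|].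
  rewrite mult_INR. pose proof (mR_ge (S n) ltac:(lia)). unfold mR in *.
  replace (mu n / INR ((N - 1) * s (S n)) * (INR (Mn n) * INR ((N - 1) * s (S n))))
    with (mu n * INR (Mn n)) by (field; lra). auto.
Qed.

Lemma mu_le_inv_prod (n : nat) : mu n <= / prod_s s n.
Proof.
  pose proof (mu_Mn n) as Hm. rewrite Mn_INR in Hm. pose proof N_ge2. pose proof (prod_s_ge1 n).
  assert (1 <= (INR N - 1)^n) by (apply pow_R1_Rle; lra).
  pose proof (mu_pos n).
  apply (Rmult_le_reg_r (prod_s s n)); [lra|]. rewrite Rinv_l by lra. nra.
Qed.

Lemma mu_small (n : nat) : mu n <= / (INR n + 1).
Proof.
  induction n; simpl mu; [simpl; lra|].
  pose proof (mR_ge (S n) ltac:(lia)). pose proof (mu_pos n). pose proof (pos_INR n). rewrite S_INR.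
  apply Rle_trans with (mu n / 4); [apply Rmult_le_compat_l; [lra | apply Rinv_le_contravar; lra]|].
  apply Rle_trans with (/ (INR n + 1) / 4); [apply Rmult_le_compat_r; lra|].
  apply (Rmult_le_reg_r (4 * (INR n + 1) * (INR n + 1 + 1))); [nra|]. field_simplify; nra.
Qed.

Lemma rem_range (u : R) (k : nat) : 0 <= u < 1 -> 0 <= rem u k < 1.
Proof.
  intros Hu; induction k; simpl; auto.
  pose proof (mR_ge (S k) ltac:(lia)).
  destruct (nfloor_spec (mR (S k) * rem u k)) as [A B]; [nra|]. lra.
Qed.

Lemma udig_range (u : R) (k : nat) : 0 <= u < 1 -> (1 <= k)%nat ->
  (s k <= udig u k)%nat /\ (udig u k <= N * s k - 1)%nat.
Proof.
  intros Hu Hk. unfold udig. split; [lia|].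
  destruct k as [|k]; [lia|]. simpl Nat.pred.
  pose proof (rem_range u k Hu) as [R1 R2]. pose proof (mR_ge (S k) ltac:(lia)).
  destruct (nfloor_spec (mR (S k) * rem u k)) as [A B]; [nra|].
  assert (INR (nfloor (mR (S k) * rem u k)) < INR ((N - 1) * s (S k))) by (unfold mR in *; nra).
  apply INR_lt in H0. pose proof (hs4 (S k) ltac:(lia)). nia.
Qed.

Lemma base_decomp (u : R) (n : nat) : u = base (udig u) n + rem u n * mu n.
Proof.
  induction n; simpl; [ring|].
  rewrite IHn at 1. unfold udig. simpl Nat.pred. rewrite plus_INR.
  pose proof (mR_ge (S n) ltac:(lia)). field. lra.
Qed.

Lemma base_ext (dg1 dg2 : nat -> nat) (n : nat) : (forall k, (1 <= k <= n)%nat -> dg1 k = dg2 k) ->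
  base dg1 n = base dg2 n.
Proof.
  induction n; intros H; simpl; auto.
  rewrite IHn by (intros; apply H; lia). rewrite (H (S n)) by lia. reflexivity.
Qed.

Definition codes (u x : R) : Prop := forall k, luroth_a1 (Liter k x) = udig u (S k).

Lemma code_exists (u : R) : 0 <= u < 1 -> exists x, Ein x /\ codes u x.
Proof.
  intros Hu. destruct (realize (udig u)) as [x [Hx Hdx]].
  { intros k Hk. destruct (udig_range u k Hu Hk) as [A _]. pose proof (hs4 k Hk). lia. }
  exists x. split; auto. split; auto. intros n Hn. destruct n as [|k]; [lia|].
  rewrite digit_S, Hdx. apply udig_range; auto; lia.
Qed.

(* The Lüroth digits of [x], indexed from [1]. *)
Definition digits (x : R) : nat -> nat := fun k => luroth_a1 (Liter (Nat.pred k) x).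

(** ** Lower bound, part 2: a set of small diameter sees a short interval of codes *)

(* [G k = (N^k s_1...s_k)^{-2}] bounds rank-[k] cylinder lengths in [E] from below. *)
Definition G (k : nat) : R := / (INR N ^ k * prod_s s k) ^ 2.

Lemma G_pos (k : nat) : 0 < G k.
Proof.
  unfold G. apply Rinv_0_lt_compat. pose proof (prod_s_ge1 k). pose proof N_ge2.
  assert (0 < INR N ^ k) by (apply pow_lt; lra). apply pow_lt. nra.
Qed.

Lemma G_S (k : nat) : G (S k) = G k / (INR N * INR (s (S k)))^2.
Proof.
  unfold G. simpl prod_s. simpl pow.
  pose proof (prod_s_ge1 k). pose proof N_ge2. assert (0 < INR N ^ k) by (apply pow_lt; lra).
  pose proof (s_ge4 (S k) ltac:(lia)). field. repeat split; lra.
Qed.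

Lemma G_decr (k k' : nat) : (k <= k')%nat -> G k' <= G k.
Proof.
  intros Hk. induction Hk; [lra|]. rewrite G_S. apply Rle_trans with (2 := IHHk).
  pose proof (G_pos m). pose proof N_ge2. pose proof (s_ge4 (S m) ltac:(lia)).
  assert (1 <= INR N * INR (s (S m))) by nra.
  assert (1 <= (INR N * INR (s (S m))) ^ 2) by (simpl; nra).
  apply (Rmult_le_reg_r ((INR N * INR (s (S m)))^2)); [lra|].
  replace (G m / (INR N * INR (s (S m))) ^ 2 * (INR N * INR (s (S m))) ^ 2) with (G m)
    by (field; nra). nra.
Qed.

Lemma G_S_le (x : R) (n : nat) : Ein x -> G (S n) <= cyl_len x n / (INR N * INR (s (S n)))^2.
Proof.
  intros HE. rewrite G_S. destruct (cyl_len_bounds x n HE) as [_ B2].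
  pose proof N_ge2. pose proof (s_ge4 (S n) ltac:(lia)).
  unfold Rdiv. apply Rmult_le_compat_r; [apply Rlt_le, Rinv_0_lt_compat, pow_lt; nra|].
  unfold G. pose proof (prod_s_ge1 n). assert (0 < INR N ^ n) by (apply pow_lt; lra).
  assert (0 < (INR N ^ n * prod_s s n) ^ 2) by (apply pow_lt; nra).
  apply (Rmult_le_reg_r ((INR N ^ n * prod_s s n) ^ 2)); auto. rewrite Rinv_l by lra. lra.
Qed.

(* Level [n] has slack for exponent [t]: [(N^n s_1...s_n)^(2t) s_(n+1)^t <= s_1...s_n]. *)
Definition dim_slack (t : R) (n : nat) : Prop :=
  t * ln (INR (s (S n))) + 2 * t * (INR n * ln (INR N) + ln (prod_s s n)) <= ln (prod_s s n).

Lemma dim_slack_eventually (t t2 : R) : 0 < t < t2 ->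
  (exists K, forall m, (K <= m)%nat -> t2 < s0_term s m) ->
  exists n0, forall n, (n0 <= n)%nat -> dim_slack t n.
Proof.
  intros Ht [K HK]. pose proof N_ge2.
  assert (HlnN : 0 < ln (INR N)) by (apply ln_gt0; lra).
  destruct (ln_prod_superlinear (t * ln (INR N) / (t2 - t))) as [K1 HK1].
  exists (Nat.max (Nat.max K 1) K1). intros n Hn. unfold dim_slack.
  assert (Hn1 : (1 <= n)%nat) by lia.
  pose proof (s0_term_gt n t2 Hn1 (HK n ltac:(lia))) as Hg.
  specialize (HK1 n ltac:(lia)). destruct (s0_parts_pos n Hn1) as [Hp Hsg].
  set (p := ln (prod_s s n)) in *. set (sg := ln (INR (s (S n)))) in *.
  assert (Hgrow : t * ln (INR N) * (INR n + 1) <= (t2 - t) * p).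
  { apply (Rmult_le_reg_r (/ (t2 - t))); [apply Rinv_0_lt_compat; lra|].
    replace ((t2 - t) * p * / (t2 - t)) with p by (field; lra).
    apply Rle_trans with (2 := HK1). right. field. lra. }
  assert (0 <= (t2 - t) * sg) by (apply Rmult_le_pos; lra).
  assert (t * ln (INR N) * INR n <= t * ln (INR N) * (INR n + 1)) by (apply Rmult_le_compat_l; nra).
  nra.
Qed.

Lemma cell_cost_le (t : R) (n : nat) (B d : R) : 0 < t -> dim_slack t n ->
  0 < B -> 1 <= B * (INR N ^ n * prod_s s n)^2 -> 0 < d ->
  mu n * Rpower (INR (s (S n)) * d / B) t <= Rpower d t.
Proof.
  intros Ht Hsl HB HB2 Hd.
  pose proof N_ge2. pose proof (s_ge4 (S n) ltac:(lia)). pose proof (prod_s_ge1 n).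
  assert (HNn : 0 < INR N ^ n) by (apply pow_lt; lra).
  assert (HQ : 0 < (INR N ^ n * prod_s s n)^2) by (apply pow_lt; nra).
  replace (INR (s (S n)) * d / B) with (d * (INR (s (S n)) / B)) by (field; lra).
  rewrite <- Rpower_mult_distr by (try apply Rdiv_lt_0_compat; lra).
  replace (mu n * (Rpower d t * Rpower (INR (s (S n)) / B) t))
    with (Rpower d t * (mu n * Rpower (INR (s (S n)) / B) t)) by ring.
  apply Rle_trans with (Rpower d t * 1); [apply Rmult_le_compat_l; [left; apply exp_pos|] | lra].
  assert (HiB : / B <= (INR N ^ n * prod_s s n)^2).
  { apply (Rmult_le_reg_l B); auto. rewrite Rinv_r by lra. lra. }
  assert (Hpw : Rpower (INR (s (S n)) / B) t <=
                Rpower (INR (s (S n)) * (INR N ^ n * prod_s s n)^2) t).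
  { apply Rle_Rpower_l; [lra|]. split; [apply Rdiv_lt_0_compat; lra|].
    apply Rmult_le_compat_l; lra. }
  assert (HE : / prod_s s n * Rpower (INR (s (S n)) * (INR N ^ n * prod_s s n)^2) t <= 1).
  { unfold Rpower. rewrite ln_mult, ln_pow, ln_mult, ln_pow by (try apply pow_lt; nra).
    rewrite <- (exp_ln (/ prod_s s n)) by (apply Rinv_0_lt_compat; lra).
    rewrite <- exp_plus, <- exp_0. apply exp_le_mono. rewrite ln_Rinv by lra.
    unfold dim_slack in Hsl. simpl INR. lra. }
  pose proof (mu_le_inv_prod n). pose proof (mu_pos n).
  apply Rle_trans with (2 := HE). apply Rmult_le_compat; auto; try lra. left; apply exp_pos.
Qed.

Definition coded_in (U : R -> Prop) (u : R) : Prop :=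
  0 <= u <= 1/2 /\ exists x, Ein x /\ codes u x /\ U x.

Definition agree_on (U : R -> Prop) (x0 : R) (k : nat) : Prop :=
  forall y, U y -> Ein y -> same_digits k x0 y.

Lemma base_prefix (u x x0 : R) (k : nat) : codes u x -> same_digits k x0 x ->
  base (udig u) k = base (digits x0) k.
Proof.
  intros Hx Hag. apply base_ext. intros j Hj. destruct j as [|j]; [lia|].
  unfold digits. simpl Nat.pred. rewrite <- Hx. symmetry. apply Hag. lia.
Qed.

Lemma cell_window (U : R -> Prop) (x0 : R) (k : nat) : agree_on U x0 k ->
  forall u, coded_in U u -> base (digits x0) k <= u <= base (digits x0) k + mu k.
Proof.
  intros Hag u [Hu [x [Ex [Hx Ux]]]].
  pose proof (base_decomp u k) as Hdec. rewrite (base_prefix u x x0 k Hx (Hag x Ux Ex)) in Hdec.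
  pose proof (rem_range u k ltac:(lra)). pose proof (mu_pos k). nra.
Qed.

Lemma digit_window (U : R -> Prop) (x0 : R) (n : nat) (Kr : R) : agree_on U x0 n ->
  (forall y, U y -> Ein y ->
     Rabs (INR (luroth_a1 (Liter n x0)) - INR (luroth_a1 (Liter n y))) <= Kr) ->
  forall u, coded_in U u ->
  base (digits x0) n + (INR (luroth_a1 (Liter n x0)) - INR (s (S n)) - Kr) * mu (S n) <= u <=
  base (digits x0) n + (INR (luroth_a1 (Liter n x0)) - INR (s (S n)) + Kr + 1) * mu (S n).
Proof.
  intros Hag HK u [Hu [x [Ex [Hx Ux]]]].
  pose proof (base_decomp u (S n)) as Hdec. cbn [base] in Hdec.
  rewrite (base_prefix u x x0 n Hx (Hag x Ux Ex)), <- Hx in Hdec.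
  pose proof (rem_range u (S n) ltac:(lra)). pose proof (mu_pos (S n)).
  pose proof (HK x Ux Ex) as Hb. apply Rabs_le_between in Hb.
  set (a := INR (luroth_a1 (Liter n x))) in *. set (a0 := INR (luroth_a1 (Liter n x0))) in *.
  assert ((a0 - Kr) * mu (S n) <= a * mu (S n) <= (a0 + Kr) * mu (S n))
    by (split; apply Rmult_le_compat_r; lra).
  assert (0 <= rem u (S n) * mu (S n) <= mu (S n)) by (split; nra).
  nra.
Qed.

Lemma split_level (U : R -> Prop) (x0 : R) (M : nat) : ~ agree_on U x0 M ->
  exists n y, agree_on U x0 n /\ U y /\ Ein y /\ luroth_a1 (Liter n x0) <> luroth_a1 (Liter n y).
Proof.
  intros HM.
  assert (Hsw : exists n, agree_on U x0 n /\ ~ agree_on U x0 (S n)).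
  { induction M as [|M IH]; [exfalso; apply HM; intros y _ _ k Hk; lia|].
    destruct (classic (agree_on U x0 M)) as [HP|HP]; [exists M; auto | apply IH, HP]. }
  destruct Hsw as [n [Hn HSn]]. exists n.
  apply NNPP. intros Hno. apply HSn. intros y Uy Ey k Hk.
  destruct (Nat.eq_dec k n) as [->|Hne]; [|apply Hn; auto; lia].
  apply NNPP. intros Hne. apply Hno. exists y. auto.
Qed.

Lemma split_level_late (U : R -> Prop) (x0 y : R) (n n0 : nat) :
  Rbar_le (diam U) (Finite (G n0 / 3)) -> U x0 -> Ein x0 -> U y -> Ein y ->
  same_digits n x0 y -> luroth_a1 (Liter n x0) <> luroth_a1 (Liter n y) ->
  (n0 <= n)%nat /\ 2/3 * (cyl_len x0 n / (INR N * INR (s (S n)))^2) <= real (diam U).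
Proof.
  intros HU Ux0 Ex0 Uy Ey Hag Hne.
  destruct (level_gap x0 y n Ex0 Ey Hag) as [Hgap _].
  pose proof (Hgap Hne) as Hg. pose proof (dist_le_diam U _ x0 y HU Ux0 Uy).
  pose proof (diam_real_le U _ x0 HU Ux0).
  assert (Hd : 2/3 * (cyl_len x0 n / (INR N * INR (s (S n)))^2) <= real (diam U))
    by (unfold Rdiv in *; lra).
  split; auto.
  destruct (le_lt_dec n0 n) as [|Hlt]; auto. exfalso.
  pose proof (G_decr (S n) n0 Hlt). pose proof (G_S_le x0 n Ex0). pose proof (G_pos n0). lra.
Qed.

Lemma window_cost (t : R) (n : nat) (B d : R) : 0 < t < 1 -> dim_slack t n -> 0 < B ->
  1 <= B * (INR N ^ n * prod_s s n)^2 -> 2/3 * (B / (INR N * INR (s (S n)))^2) <= d ->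
  Rmin ((2 * (1 + (INR N * INR (s (S n)))^2 * d / B) + 1) * mu (S n)) (mu n) <=
  Rpower (7 * INR N ^ 2) t * Rpower d t.
Proof.
  intros Ht Hsl HB HB2 Hd.
  pose proof N_ge2. pose proof (s_ge4 (S n) ltac:(lia)) as Hsv.
  pose proof (mu_pos n). pose proof (mR_ge (S n) ltac:(lia)) as [HmR _].
  pose proof (cell_cost_le t n B d ltac:(lra) Hsl HB HB2) as Hcell.
  set (sv := INR (s (S n))) in *.
  assert (HNs : 0 < (INR N * sv)^2) by (apply pow_lt; nra).
  set (w := (INR N * sv)^2 * d / B).
  assert (Hw : 2/3 <= w).
  { unfold w. apply (Rmult_le_reg_r (B / (INR N * sv)^2)); [apply Rdiv_lt_0_compat; lra|].
    replace ((INR N * sv)^2 * d / B * (B / (INR N * sv)^2)) with d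
      by (field; repeat split; lra). lra. }
  assert (Hd0 : 0 < d) by (assert (0 < B / (INR N * sv)^2) by (apply Rdiv_lt_0_compat; lra); lra).
  assert (Hmu1 : mu (S n) <= mu n / sv).
  { simpl mu. unfold Rdiv. apply Rmult_le_compat_l; [lra | apply Rinv_le_contravar; lra]. }
  set (z := 7 * INR N ^ 2 * (sv * d / B)).
  assert (Hz : 0 < z) by (unfold z; apply Rmult_lt_0_compat; [nra | apply Rdiv_lt_0_compat; nra]).
  assert (Hlen : (2 * (1 + w) + 1) * mu (S n) <= mu n * z).
  { replace (mu n * z) with (7 * w * (mu n / sv)) by (unfold z, w; field; repeat split; lra).
    assert (0 <= mu (S n)) by (left; apply mu_pos).
    apply Rle_trans with (7 * w * mu (S n)); [nra|]. apply Rmult_le_compat_l; nra. }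
  assert (Hcost : mu n * Rpower z t <= Rpower (7 * INR N ^ 2) t * Rpower d t).
  { unfold z. rewrite <- Rpower_mult_distr by (try apply Rdiv_lt_0_compat; nra).
    specialize (Hcell Hd0). pose proof (Rpower_pos (7 * INR N ^ 2) t). nra. }
  apply Rle_trans with (2 := Hcost). apply le_mul_Rpower; auto; try lra; [apply Rmin_r |].
  apply Rle_trans with (2 := Hlen). apply Rmin_l.
Qed.

(* The codes of the points of [E] in a set [U] of diameter [d <= G n0 / 3] lie in an interval
   of length at most [(7 N^2)^t d^t + eta]: if [U] does not split the rank-[M] cylinders
   ([mu M <= eta]) one cell suffices, otherwise use the windows at the first splitting level. *)
Lemma codes_interval (t : R) (n0 : nat) (U : R -> Prop) (eta : R) : 0 < t < 1 ->
  (forall n, (n0 <= n)%nat -> dim_slack t n) ->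
  Rbar_le (diam U) (Finite (G n0 / 3)) -> 0 < eta ->
  exists lo hi, (forall u, coded_in U u -> lo <= u <= hi) /\
    hi - lo <= Rpower (7 * INR N ^ 2) t * powt (real (diam U)) t + eta.
Proof.
  intros Ht Hsl HU Heta.
  assert (HC : 0 <= Rpower (7 * INR N ^ 2) t * powt (real (diam U)) t)
    by (apply Rmult_le_pos; [left; apply Rpower_pos | apply powt_nonneg]).
  destruct (classic (exists x0, U x0 /\ Ein x0)) as [[x0 [Ux0 Ex0]]|Hno].
  2:{ exists 2, 2. split; [|lra].
      intros u [_ [x [Ex [_ Ux]]]]. exfalso; apply Hno; exists x; auto. }
  destruct (nat_above (/ eta)) as [M HM].
  assert (HmuM : mu M <= eta).
  { apply Rle_trans with (/ (INR M + 1)); [apply mu_small|].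
    rewrite <- (Rinv_inv eta). apply Rinv_le_contravar; [apply Rinv_0_lt_compat; lra | lra]. }
  destruct (classic (agree_on U x0 M)) as [HPM|HPM].
  { exists (base (digits x0) M), (base (digits x0) M + mu M).
    split; [apply cell_window; auto | lra]. }
  destruct (split_level U x0 M HPM) as [n [y [Hag [Uy [Ey Hne]]]]].
  destruct (split_level_late U x0 y n n0 HU Ux0 Ex0 Uy Ey (Hag y Uy Ey) Hne) as [Hn0 Hgap].
  assert (HB : 0 < cyl_len x0 n) by (apply cyl_len_pos, Ex0).
  pose proof (window_cost t n _ _ Ht (Hsl n Hn0) HB (proj2 (cyl_len_bounds x0 n Ex0)) Hgap)
    as Hcost.
  set (d := real (diam U)) in *. set (B := cyl_len x0 n) in *.
  set (A := INR N * INR (s (S n))) in *. set (Kr := 1 + A^2 * d / B) in *.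
  assert (Hd : 0 < d).
  { apply Rlt_le_trans with (2 := Hgap). pose proof N_ge2. pose proof (s_ge4 (S n) ltac:(lia)).
    apply Rmult_lt_0_compat; [lra | apply Rdiv_lt_0_compat; [lra | apply pow_lt; unfold A; nra]]. }
  assert (HK : forall x, U x -> Ein x ->
            Rabs (INR (luroth_a1 (Liter n x0)) - INR (luroth_a1 (Liter n x))) <= Kr).
  { intros x Ux Ex. destruct (level_gap x0 x n Ex0 Ex (Hag x Ux Ex)) as [_ Hc].
    apply Rle_trans with (1 := Hc). unfold Kr. apply Rplus_le_compat_l.
    unfold Rdiv. apply Rmult_le_compat_r; [left; apply Rinv_0_lt_compat; lra|].
    apply Rmult_le_compat_l; [apply pow2_ge_0 | exact (dist_le_diam U _ x0 x HU Ux0 Ux)]. }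
  replace (powt d t) with (Rpower d t)
    by (unfold powt; destruct (Rle_dec d 0); [lra | reflexivity]).
  destruct (Rle_lt_dec ((2 * Kr + 1) * mu (S n)) (mu n)) as [Hc|Hc].
  - rewrite Rmin_left in Hcost by lra.
    eexists; eexists; split; [apply (digit_window U x0 n Kr Hag HK)|]. lra.
  - rewrite Rmin_right in Hcost by lra.
    eexists; eexists; split; [apply (cell_window U x0 n Hag)|]. lra.
Qed.

(* Pulling a cover of [E] back to [[0, 1/2]] through the coding: its cost is [>= 1/2]
   up to the factor [(7 N^2)^t]. *)
Lemma cover_cost_ge (t : R) (n0 : nat) (U : nat -> R -> Prop) (Sc : R) : 0 < t < 1 ->
  (forall n, (n0 <= n)%nat -> dim_slack t n) ->
  (forall x, Ein x -> exists i, U i x) -> (forall i, Rbar_le (diam (U i)) (Finite (G n0 / 3))) ->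
  (forall n, sum_f_R0 (fun i => powt (real (diam (U i))) t) n <= Sc) ->
  1/2 <= Rpower (7 * INR N ^ 2) t * Sc.
Proof.
  intros Ht Hsl Hcov Hdiam HS. set (C := Rpower (7 * INR N ^ 2) t).
  assert (HC : 0 < C) by apply Rpower_pos.
  assert (Hmain : forall eta, 0 < eta -> 1/2 <= C * Sc + eta).
  { intros eta Heta.
    assert (Hint : forall i, exists pr : R * R,
       (forall u, coded_in (U i) u -> fst pr <= u <= snd pr) /\
       snd pr - fst pr <= C * powt (real (diam (U i))) t + eta * (1/2)^(S i)).
    { intros i. destruct (codes_interval t n0 (U i) (eta * (1/2)^(S i)) Ht Hsl (Hdiam i))
        as [lo [hi Hlh]];
        [apply Rmult_lt_0_compat; [lra | apply pow_lt; lra] | exists (lo, hi); exact Hlh]. }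
    set (F := fun i => proj1_sig (constructive_indefinite_description _ (Hint i))).
    assert (HF : forall i, (forall u, coded_in (U i) u -> fst (F i) <= u <= snd (F i)) /\
       snd (F i) - fst (F i) <= C * powt (real (diam (U i))) t + eta * (1/2)^(S i))
      by (intros i; exact (proj2_sig (constructive_indefinite_description _ (Hint i)))).
    apply (interval_cover_length (1/2) _ (fun i => fst (F i)) (fun i => snd (F i))); [lra| |].
    - intros u Hu. destruct (code_exists u ltac:(lra)) as [x [Ex Hx]].
      destruct (Hcov x Ex) as [i Ui]. exists i. apply (proj1 (HF i)). split; [lra|]. exists x; auto.
    - intros n.
      apply Rle_trans
        with (sum_f_R0 (fun i => C * powt (real (diam (U i))) t + eta * (1/2)^(S i)) n).
      + apply sum_Rle. intros i _. apply Rmax_lub; [|apply HF].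
        pose proof (powt_nonneg (real (diam (U i))) t). pose proof (pow_lt (1/2) (S i) ltac:(lra)).
        apply Rplus_le_le_0_compat; apply Rmult_le_pos; lra.
      + rewrite sum_plus.
        rewrite (sum_eq _ (fun i => powt (real (diam (U i))) t * C)) by (intros; ring).
        rewrite (sum_eq (fun i => eta * (1/2)^(S i)) (fun i => (1/2)^(S i) * eta))
          by (intros; ring).
        rewrite <- !scal_sum. pose proof (HS n). pose proof (geom_half_sum n). nra. }
  destruct (Rle_lt_dec (1/2) (C * Sc)) as [H|H]; auto.
  specialize (Hmain ((1/2 - C * Sc)/2) ltac:(lra)). lra.
Qed.

Lemma hausdorff_pos_below (t : R) (n0 : nat) : 0 < t < 1 ->
  (forall n, (n0 <= n)%nat -> dim_slack t n) -> hausdorff_measure t Ein <> Finite 0.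
Proof.
  intros Ht Hsl. set (C := Rpower (7 * INR N ^ 2) t). assert (HC : 0 < C) by apply Rpower_pos.
  apply (hausdorff_measure_pos t Ein (G n0 / 3) (/ (2 * C))).
  { pose proof (G_pos n0). lra. }
  { apply Rinv_0_lt_compat. lra. }
  intros U Hcov Hdiam. apply Rbar_series_ge. intros Sc HS.
  pose proof (cover_cost_ge t n0 U Sc Ht Hsl Hcov Hdiam HS) as Hge. fold C in Hge.
  apply (Rmult_le_reg_l (2 * C)); [lra|]. rewrite Rinv_r by lra. lra.
Qed.

End TargetSet.

(** The terms of the [liminf] lie in [[0, 1/2]], so [s_0] is a real [l]; for [t > l] the
   upper bound gives [H^t(E) = 0], for [0 < t < l] the lower bound gives [H^t(E) > 0]. *)

Theorem lemma3p1 (s : nat -> nat)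
  (hs4 : forall n, (1 <= n)%nat -> (4 <= s n)%nat)
  (hsinf : forall M : nat, exists K : nat, forall n, (K <= n)%nat -> (M <= s n)%nat)
  (N : nat) (hN : (2 <= N)%nat) :
  hausdorff_dim
    (fun x => 0 < x <= 1 /\
       forall n, (1 <= n)%nat ->
         (s n <= luroth_digit n x)%nat /\ (luroth_digit n x <= N * s n - 1)%nat)
  = LimInf_seq (fun n => s0_term s (S n)).
Proof.
  change (fun x => _ /\ forall n, _ -> _) with (Ein s N).
  destruct (liminf_bounded (fun n => s0_term s (S n)) 0 (1/2)) as [l [Hl [Hl01 [Hfreq Hev]]]].
  { intros n. apply s0_term_range; auto; lia. }
  rewrite Hl. apply hausdorff_dim_eq; [lra | |].
  - intros t Ht. apply (hausdorff_null_above s hs4 hsinf N hN t ((l + t) / 2)); [lra|].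
    intros K. destruct (Hfreq ((l + t) / 2) ltac:(lra) K) as [n [Hn Hs]].
    exists (S n). repeat split; auto; lia.
  - intros t Ht Htl.
    destruct (dim_slack_eventually s hs4 hsinf N hN t ((t + l) / 2)) as [n0 Hn0]; [lra|..].
    { destruct (Hev ((t + l) / 2) ltac:(lra)) as [K HK].
      exists (S K). intros [|m] Hm; [lia | apply HK; lia]. }
    apply (hausdorff_pos_below s hs4 N hN t n0); [lra | exact Hn0].
Qed.
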